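(* Suppose $n\ge 2$ and $k\ge 4$, and let ${\bf a}_1,\ldots,{\bf a}_k$ be sequences of positive integers each with sum at most $n$. Then the multiple flag variety $M_{{\bf a}_1}\times\cdots\times M_{{\bf a}_k}$ has infinitely many orbits under the diagonal action of $G$.
   Context: $\mathbb F$ is an infinite field of characteristic $\ne 2$. Equip $\mathbb F^{2n}$ (canonical basis $e_1,\ldots,e_{2n}$) with the symmetric bilinear form $(e_i,e_j)=\delta_{i,2n+1-j}$, and let $G={\rm O}_{2n}(\mathbb F)$ be its isometry group in ${\rm GL}_{2n}(\mathbb F)$. A subspace $V$ is isotropic if $(V,V)=\{0\}$. For a sequence ${\bf a}=(\alpha_1,\ldots,\alpha_p)$ of positive integers with $\alpha_1+\cdots+\alpha_p\le n$, $M_{\bf a}$ is the set of flags $V_1\subset\cdots\subset V_p$ of subspaces of $\mathbb F^{2n}$ with $\dim V_j=\alpha_1+\cdots+\alpha_j$ and $V_p$ isotropic; $G$ acts on the product diagonally. *)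

From HB Require Import structures.
From mathcomp Require Import all_boot all_order all_algebra.
Set Implicit Arguments. Unset Strict Implicit. Unset Printing Implicit Defensive.
Import GRing.Theory.
Local Open Scope ring_scope.

(* Vectors of F^{2n} are row vectors 'rV[F]_(n.*2); the basis vector e_(i+1)
   is the i-th unit row (0-indexed).  A subspace is represented by a matrix
   whose row space is that subspace; subspaces are compared with (_ == _)%MS. *)

(* Gram matrix of the form (e_i, e_j) = delta_{i, 2n+1-j}; 0-indexed: i+j = 2n-1 *)
Definition Jform (F : fieldType) (n : nat) : 'M[F]_(n.*2) :=
  \matrix_(i, j) (((i : nat) + j == n.*2.-1)%N)%:R.

Definition in_O2n (F : fieldType) (n : nat) (g : 'M[F]_(n.*2)) : Prop :=
  g \in unitmx /\ g *m Jform F n *m g^T = Jform F n.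

Definition isotropic (F : fieldType) (n m : nat) (V : 'M[F]_(m, n.*2)) : Prop :=
  V *m Jform F n *m V^T = 0.

Definition is_flag (F : fieldType) (n : nat) (a : seq nat)
    (V : 'I_(size a) -> 'M[F]_(n.*2)) : Prop :=
  (forall j : 'I_(size a), \rank (V j) = (\sum_(l < size a | (l <= j)%N) nth 0%N a l)%N)
  /\ (forall j1 j2 : 'I_(size a), (j1 <= j2)%N -> (V j1 <= V j2)%MS)
  /\ (forall j : 'I_(size a), (j.+1 = size a)%N -> isotropic (V j)).

Definition multiflag_pt (F : fieldType) (n k : nat) (a : 'I_k -> seq nat) :=
  forall i : 'I_k, 'I_(size (a i)) -> 'M[F]_(n.*2).

Definition is_multiflag (F : fieldType) (n k : nat) (a : 'I_k -> seq nat)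
    (x : multiflag_pt F n a) : Prop :=
  forall i : 'I_k, is_flag (x i).

Definition same_orbit (F : fieldType) (n k : nat) (a : 'I_k -> seq nat)
    (x y : multiflag_pt F n a) : Prop :=
  exists g : 'M[F]_(n.*2), in_O2n g /\
    forall (i : 'I_k) (j : 'I_(size (a i))), (x i j *m g == y i j)%MS.

Definition finitely_many_orbits (F : fieldType) (n k : nat) (a : 'I_k -> seq nat) : Prop :=
  exists (N : nat) (r : 'I_N -> multiflag_pt F n a),
    forall x : multiflag_pt F n a, is_multiflag x ->
      exists t : 'I_N, same_orbit x (r t).

Definition admissible (n : nat) (s : seq nat) : Prop :=
  (0 < size s)%N /\ all (fun x => 0 < x)%N s /\ (sumn s <= n)%N.

From HB Require Import structures.
From mathcomp Require Import all_boot all_order all_algebra.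
From mathcomp Require Import perm ring zify.
Set Implicit Arguments. Unset Strict Implicit. Unset Printing Implicit Defensive.
Import GRing.Theory.
Local Open Scope ring_scope.

(* The coordinates e_1, e_n, e_(n+1), e_2n span a hyperbolic 4-space W, and
   each isometry h of W extends by the identity to an element embed4 h of G.
   On four of the k factors, move the standard flag (spanned by initial
   segments of e_1, ..., e_2n, isotropic because the parts sum to at most n)
   by embed4 h_i, where only h_1 depends on a parameter t.  The first subspace
   of the i-th flag meets W in the line spanned by row 0 of h_i or, when it
   has dimension n, in the isotropic plane spanned by rows 0 and 1.  An
   isometry g carrying the configuration for t to the one for s maps these
   rows into the corresponding subspaces for s, so their Gram matrices satisfy
   G_t(i, j) = U_i G_s(i, j) U_j^T for some matrices U_i.  If one of the four
   first subspaces has dimension < n, the (0, 0) entries of these identities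
   force t = s.  Otherwise 2 x 2 determinants show that the squared
   cross-ratio of the four planes is invariant: t^2 (s - 1)^2 = s^2 (t - 1)^2,
   a relation that holds pairwise for no three distinct parameters.  Since F
   is infinite, the pigeonhole principle yields infinitely many orbits. *)

Lemma pigeonhole_fiber_gt2 (T : finType) N (f : T -> 'I_N) :
  (2 * N < #|T|)%N -> exists m, (2 < #|[set x | f x == m]|)%N.
Proof.
move=> hT; apply/existsP; apply: contraLR hT; rewrite negb_exists -leqNgt => /forallP small.
rewrite -sum1_card (partition_big f xpredT) //=.
rewrite mulnC -[X in (_ <= X * _)%N]card_ord -sum_nat_const; apply: leq_sum => m _.
by rewrite sum1dep_card leqNgt small.
Qed.

Section PidMx.
Variable F : fieldType.

Lemma mul_pid_mxE m p r (A : 'M[F]_(m, p)) i j :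
  (pid_mx r *m A) i j = ((i < r)%N)%:R * A i j.
Proof.
rewrite mxE (bigD1 i) //= big1 ?addr0 => [|l nli]; rewrite mxE; first by rewrite eqxx.
by rewrite val_eqE eq_sym (negbTE nli) mul0r.
Qed.

Lemma mulmx_pidE m p r (A : 'M[F]_(m, p)) i j :
  (A *m pid_mx r) i j = A i j * ((j < r)%N)%:R.
Proof. by rewrite -[A *m _]trmxK trmx_mul tr_pid_mx mxE mul_pid_mxE mxE mulrC. Qed.

Lemma mulmx_pid_widen m p (U : 'M[F]_(m, p)) r r' :
  U *m pid_mx r = U -> (r <= r')%N -> U *m pid_mx r' = U.
Proof. by move=> <- rr'; rewrite -mulmxA mul_pid_mx (minn_idPl rr') pid_mx_minh. Qed.

End PidMx.

Section SplitForm.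
Variables (F : fieldType) (n : nat).
Local Notation J := (Jform F n).

Lemma Jform_rowsub : J = rowsub (@rev_ord _) 1%:M.
Proof.
apply/matrixP => i j; rewrite !mxE; suff -> : (i + j == n.*2.-1)%N = (rev_ord i == j) by [].
apply/eqP/eqP => [e|<-] /=; last by move: (ltn_ord i); lia.
by apply: val_inj => /=; move: (ltn_ord i) (ltn_ord j) e; lia.
Qed.

Lemma trmx_Jform : J^T = J.
Proof. by apply/matrixP => i j; rewrite !mxE addnC. Qed.

Lemma Jform_invol : J *m J = 1%:M.
Proof.
rewrite {1}Jform_rowsub -rowsubE Jform_rowsub -rowsub_comp.
by rewrite (eq_rowsub _ rev_ordK); apply: mxsub_id.
Qed.

Lemma pid_Jform_pid D D' : (D <= n)%N -> (D' <= n)%N ->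
  pid_mx D *m J *m pid_mx D' = 0 :> 'M_(n.*2).
Proof.
move=> hD hD'; apply/matrixP => i j; rewrite mulmx_pidE mul_pid_mxE !mxE.
case: (ltnP i D) => [hi|]; last by rewrite !mul0r.
case: (ltnP j D') => [hj|]; last by rewrite mulr0.
by rewrite (_ : (_ == _) = false) ?mulr0 ?mul0r //; apply/eqP; lia.
Qed.

Lemma in_O2n_mul (g1 g2 : 'M[F]_(n.*2)) : in_O2n g1 -> in_O2n g2 -> in_O2n (g1 *m g2).
Proof.
case=> u1 J1 [u2 J2]; split; first by rewrite unitmx_mul u1.
by rewrite trmx_mul mulmxA -(mulmxA g1) -(mulmxA g1) J2 J1.
Qed.

Lemma in_O2n_inv (g : 'M[F]_(n.*2)) : in_O2n g -> in_O2n (invmx g).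
Proof.
case=> u Jg; split; first by rewrite unitmx_inv.
rewrite -{1}Jg !mulmxA mulVmx // mul1mx -mulmxA trmx_inv mulmxV ?mulmx1 //.
by rewrite unitmx_tr.
Qed.

Lemma in_O2n_gram (g : 'M[F]_(n.*2)) p q (X : 'M_(p, n.*2)) (Y : 'M_(q, n.*2)) :
  in_O2n g -> X *m g *m J *m (Y *m g)^T = X *m J *m Y^T.
Proof. by case=> _ gJ; rewrite -[in RHS]gJ trmx_mul !mulmxA. Qed.

Variables (k : nat) (a : 'I_k -> seq nat).

Lemma same_orbit_sym (x y : multiflag_pt F n a) : same_orbit x y -> same_orbit y x.
Proof.
case=> g [hg xy]; exists (invmx g); split; first exact: in_O2n_inv.
move=> i j; have gu : g \in unitmx by case: hg.
by apply/eqmxP; rewrite -[x i j](mulmxK gu); apply/eqmxMr/eqmx_sym/eqmxP.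
Qed.

Lemma same_orbit_trans (x y z : multiflag_pt F n a) :
  same_orbit x y -> same_orbit y z -> same_orbit x z.
Proof.
case=> g1 [h1 xy] [g2 [h2 yz]]; exists (g1 *m g2); split; first exact: in_O2n_mul.
move=> i j; have /eqmxP e1 := xy i j; have /eqmxP e2 := yz i j.
by apply/eqmxP; rewrite mulmxA; apply: eqmx_trans (eqmxMr g2 e1) e2.
Qed.

End SplitForm.

Section FourSpace.
Variables (F : fieldType) (n : nat).
Hypothesis n_ge2 : (2 <= n)%N.
Local Notation J := (Jform F n).
Local Notation J4 := (Jform F 2%N).

(* The 0-indexed coordinates of W; the form pairs the first with the last and
   the second with the third, so it restricts to Jform F 2 on W. *)
Definition coord4_nat (c : nat) : nat :=
  (match c with 0 => 0 | 1 => n.-1 | 2 => n | _ => n.*2.-1 end)%N.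

Lemma coord4_lt (c : 'I_4) : (coord4_nat c < n.*2)%N.
Proof. by case: c => [[|[|[|[|c]]]] //= _]; lia. Qed.

Definition coord4 (c : 'I_4) : 'I_(n.*2) := Ordinal (coord4_lt c).

Lemma coord4_inj : injective coord4.
Proof.
move=> c d /(congr1 val) /=; case: c d => [[|[|[|[|c]]]] hc] // [[|[|[|[|d]]]] hd] //= e;
  by apply: val_inj => /=; lia.
Qed.

Lemma coord4_rev c : coord4 (rev_ord c) = rev_ord (coord4 c).
Proof. by apply: val_inj; case: c => [[|[|[|[|c]]]] //= _]; lia. Qed.

(* For 0 < D <= n, the number of coordinates of W among those of e_1, ..., e_D. *)
Definition vis4 (D : nat) : nat := if D == n then 2%N else 1%N.

Lemma vis4_le2 D : (vis4 D <= 2)%N.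
Proof. by rewrite /vis4; case: eqP. Qed.

Lemma coord4_ltn_vis4 D c : (0 < D <= n)%N -> (coord4 c < D)%N = (c < vis4 D)%N.
Proof.
by rewrite /vis4; case: c => [[|[|[|[|c]]]] //= _] /andP [D_gt0 D_le]; case: eqP; lia.
Qed.

Definition sel4 : 'M[F]_(4, n.*2) := rowsub coord4 1%:M.

Lemma sel4_trmx : sel4 *m sel4^T = 1%:M.
Proof.
rewrite /sel4 trmx_mxsub trmx1 -mxsub_mul mul1mx.
by apply/matrixP => c d; rewrite !mxE (inj_eq coord4_inj).
Qed.

Lemma sel4_Jform : sel4 *m J = J4 *m sel4.
Proof.
rewrite /sel4 -rowsubE !Jform_rowsub mul_rowsub_mx mul1mx -!rowsub_comp.
by apply: eq_rowsub => c /=; rewrite coord4_rev.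
Qed.

Lemma Jform_sel4_tr : J *m sel4^T = sel4^T *m J4.
Proof. by rewrite -(trmx_Jform F n) -(trmx_Jform F 2%N) -!trmx_mul sel4_Jform. Qed.

Definition form4 (h h' : 'M[F]_4) : 'M[F]_4 := h *m J4 *m h'^T.

Definition embed4 (h : 'M[F]_4) : 'M[F]_(n.*2) := 1%:M + sel4^T *m (h - 1%:M) *m sel4.

Lemma form4_sub1 (A B : 'M[F]_4) :
  form4 (1%:M + A) (1%:M + B) - J4 = A *m J4 + J4 *m B^T + A *m J4 *m B^T.
Proof.
rewrite /form4 linearD /= trmx1 !(mulmxDl, mulmxDr, mulmx1, mul1mx).
by rewrite addrAC [J4 + _]addrC addrK addrCA addrA.
Qed.

Lemma embed4_gram h h' :
  embed4 h *m J *m (embed4 h')^T = J + sel4^T *m (form4 h h' - J4) *m sel4.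
Proof.
have SJ X : X *m sel4 *m J = X *m J4 *m sel4 by rewrite -!mulmxA sel4_Jform.
have SSt X : X *m sel4 *m sel4^T = X by rewrite -mulmxA sel4_trmx mulmx1.
rewrite /embed4 -[h in RHS](subrK 1%:M) -[h' in RHS](subrK 1%:M) ![_ + 1%:M]addrC.
rewrite form4_sub1; move: (h - 1%:M) (h' - 1%:M) => A B.
rewrite linearD /= trmx1 !trmx_mul trmxK !(mulmxDl, mulmxDr, mulmx1, mul1mx).
rewrite !mulmxA !SJ Jform_sel4_tr !SSt.
by rewrite -!addrA; congr (_ + _); rewrite addrCA.
Qed.

Lemma sel4_gram_embed4 h h' :
  sel4 *m (embed4 h *m J *m (embed4 h')^T) *m sel4^T = form4 h h'.
Proof.
have SSt X : X *m sel4 *m sel4^T = X by rewrite -mulmxA sel4_trmx mulmx1.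
rewrite embed4_gram mulmxDr mulmxDl !mulmxA sel4_Jform sel4_trmx mul1mx !SSt.
by rewrite addrC subrK.
Qed.

Lemma embed4_in_O2n h : form4 h h = J4 -> in_O2n (embed4 h).
Proof.
move=> hJ4; have hJ : embed4 h *m J *m (embed4 h)^T = J.
  by rewrite embed4_gram hJ4 subrr mulmx0 mul0mx addr0.
split=> //; have /mulmx1_unit[] // : embed4 h *m (J *m (embed4 h)^T *m J) = 1%:M.
by rewrite !mulmxA hJ Jform_invol.
Qed.

Lemma sel4_pid D : (0 < D <= n)%N -> sel4 *m pid_mx D = pid_mx (vis4 D) *m sel4.
Proof.
move=> hD; apply/matrixP => c q; rewrite mulmx_pidE mul_pid_mxE !mxE.
by case: eqP => [<-|_]; rewrite ?mulr0 ?mul0r // coord4_ltn_vis4 // mulrC.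
Qed.

Lemma pid_embed4_gram h h' D D' : (0 < D <= n)%N -> (0 < D' <= n)%N ->
  pid_mx D *m embed4 h *m J *m (pid_mx D' *m embed4 h')^T =
  sel4^T *m (pid_mx (vis4 D) *m form4 h h' *m pid_mx (vis4 D')) *m sel4.
Proof.
move=> hD hD'; have [/andP[_ Dn] /andP[_ D'n]] := (hD, hD').
rewrite trmx_mul tr_pid_mx.
set P := pid_mx D : 'M[F]_(n.*2); set P' := pid_mx D' : 'M[F]_(n.*2).
have -> : P *m embed4 h *m J *m ((embed4 h')^T *m P') =
    P *m (embed4 h *m J *m (embed4 h')^T) *m P' by rewrite !mulmxA.
rewrite embed4_gram mulmxDr mulmxDl pid_Jform_pid // add0r.
have PSt : P *m sel4^T = sel4^T *m pid_mx (vis4 D).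
  by rewrite -[P]tr_pid_mx -trmx_mul sel4_pid // trmx_mul tr_pid_mx.
rewrite !mulmxA PSt -(mulmxA _ sel4 P') sel4_pid // -!mulmxA; congr (_ *m _).
rewrite !mulmxA mulmxBr mulmxBl (@pid_Jform_pid F 2%N) ?vis4_le2 // subr0.
by rewrite /form4 !mulmxA.
Qed.

End FourSpace.

Definition flag_dim (s : seq nat) (j : nat) : nat :=
  (\sum_(l < size s | (l <= j)%N) nth 0%N s l)%N.

Lemma flag_dim_le_sumn s j : (flag_dim s j <= sumn s)%N.
Proof.
rewrite /flag_dim sumnE (big_nth 0%N) big_mkord.
by rewrite [X in (_ <= X)%N](bigID (fun l : 'I__ => (l <= j)%N)) leq_addr.
Qed.

Lemma flag_dim_mono s : {homo flag_dim s : j1 j2 / (j1 <= j2)%N}.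
Proof.
move=> j1 j2 j12; rewrite /flag_dim !(big_mkcond (fun l : 'I__ => (l <= _)%N)) /=.
by apply: leq_sum => l _; case: ifP => // l_le; rewrite (leq_trans l_le j12).
Qed.

Lemma flag_dim0_gt0 s : (0 < size s)%N -> all (fun x => 0 < x)%N s -> (0 < flag_dim s 0)%N.
Proof.
case: s => // x s _ /andP[x_gt0 _].
by rewrite /flag_dim (bigD1 ord0) //= ltn_addr.
Qed.

Section Configuration.
Variables (F : fieldType) (n : nat) (n_ge2 : (2 <= n)%N).
Variables (k : nat) (a : 'I_k -> seq nat).
Hypothesis a_adm : forall i, admissible n (a i).
Local Notation J := (Jform F n).
Local Notation J4 := (Jform F 2%N).
Local Notation embed4 := (embed4 n_ge2).
Local Notation sel4 := (sel4 F n_ge2).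

Lemma flag_dim_le i j : (flag_dim (a i) j <= n)%N.
Proof. by have [_ [_ sum_le]] := a_adm i; apply: leq_trans (flag_dim_le_sumn _ _) sum_le. Qed.

Lemma flag_dim_gt0 i j : (0 < flag_dim (a i) j)%N.
Proof.
have [size_gt0 [all_gt0 _]] := a_adm i.
exact: leq_trans (flag_dim0_gt0 size_gt0 all_gt0) (flag_dim_mono _ (leq0n j)).
Qed.

Definition cfg (hh : 'I_k -> 'M[F]_4) (i : 'I_k) (j : 'I_(size (a i))) : 'M[F]_(n.*2) :=
  pid_mx (flag_dim (a i) j) *m embed4 (hh i).
Arguments cfg hh i j : clear implicits.

Lemma cfg_multiflag hh : (forall i, form4 (hh i) (hh i) = J4) -> is_multiflag (cfg hh).
Proof.
move=> hh_iso i; have [hu _] := embed4_in_O2n n_ge2 (hh_iso i).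
have le2n j : (flag_dim (a i) j <= n.*2)%N by apply: leq_trans (flag_dim_le i j) _; lia.
split; [|split].
- by move=> j; rewrite /cfg mxrankMfree ?row_free_unit // rank_pid_mx.
- move=> j1 j2 j12; rewrite /cfg.
  have -> : pid_mx (flag_dim (a i) j1) =
      pid_mx (flag_dim (a i) j1) *m (pid_mx (flag_dim (a i) j2) : 'M_(n.*2))
      :> 'M[F]_(n.*2).
    by rewrite mul_pid_mx (minn_idPl (flag_dim_mono _ j12)) (minn_idPr (le2n _)).
  by rewrite -mulmxA submxMl.
- move=> j _; rewrite /isotropic /cfg pid_embed4_gram ?flag_dim_gt0 ?flag_dim_le //.
  by rewrite hh_iso (@pid_Jform_pid F 2%N) ?vis4_le2 // mulmx0 mul0mx.
Qed.

Section Transport.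
Variables (ht hs : 'I_k -> 'M[F]_4) (g : 'M[F]_(n.*2)).
Hypothesis g_iso : in_O2n g.
Hypothesis g_maps : forall (i : 'I_k) (j : 'I_(size (a i))), (cfg ht i j *m g == cfg hs i j)%MS.

Local Notation vis i := (vis4 n (flag_dim (a i) 0)).

Let first i : 'I_(size (a i)) := Ordinal (proj1 (a_adm i)).

Let X i : 'M[F]_(4, n.*2) := (pid_mx (vis i) : 'M_4) *m sel4 *m embed4 (ht i).

(* The rows of X i lie in the first subspace of flag i for ht, so g maps them
   into that of hs; transport_mx i expresses their images through the rows of
   hs i that are visible in W. *)
Definition transport_mx i : 'M[F]_4 :=
  X i *m g *m pinvmx (cfg hs i (first i)) *m sel4^T *m pid_mx (vis i).

Lemma transport_mx_pid i : transport_mx i *m pid_mx (vis i) = transport_mx i.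
Proof. by rewrite /transport_mx -mulmxA pid_mx_id // (leq_trans (vis4_le2 n _)). Qed.

Lemma form4_transport i j :
  pid_mx (vis i) *m form4 (ht i) (ht j) *m pid_mx (vis j) =
  transport_mx i *m form4 (hs i) (hs j) *m (transport_mx j)^T.
Proof.
have D_range l : (0 < flag_dim (a l) 0 <= n)%N by rewrite flag_dim_gt0 flag_dim_le.
have X_sub l : (X l *m g <= cfg hs l (first l))%MS.
  have /andP[gmap _] := g_maps (first l).
  by rewrite /X -sel4_pid // -!mulmxA (submx_trans (submxMl _ _)) // mulmxA.
set Z := fun l => X l *m g *m pinvmx (cfg hs l (first l)).
have XgE l : X l *m g = Z l *m cfg hs l (first l) by rewrite mulmxKpV.
have -> : pid_mx (vis i) *m form4 (ht i) (ht j) *m pid_mx (vis j) = X i *m J *m (X j)^T.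
  by rewrite -(sel4_gram_embed4 n_ge2) /X /= !trmx_mul tr_pid_mx !mulmxA.
rewrite -(in_O2n_gram _ _ g_iso) !XgE.
have -> : Z i *m cfg hs i (first i) *m J *m (Z j *m cfg hs j (first j))^T =
    Z i *m (cfg hs i (first i) *m J *m (cfg hs j (first j))^T) *m (Z j)^T.
  by rewrite trmx_mul !mulmxA.
rewrite pid_embed4_gram // /transport_mx -/(Z i) -/(Z j).
by rewrite [(_ *m pid_mx _)^T]trmx_mul [(Z j *m _)^T]trmx_mul trmxK tr_pid_mx !mulmxA.
Qed.
End Transport.
End Configuration.

Local Notation o0 := (@Ordinal 4%N 0%N isT).
Local Notation o1 := (@Ordinal 4%N 1%N isT).
Local Notation o2 := (@Ordinal 4%N 2%N isT).
Local Notation o3 := (@Ordinal 4%N 3%N isT).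

Section FourByFour.
Variable F : fieldType.
Local Notation J4 := (Jform F 2%N).

Lemma sum4 (G : 'I_4 -> F) : \sum_(c < 4) G c = G o0 + G o1 + G o2 + G o3.
Proof.
rewrite !big_ord_recr big_ord0 /= -!addrA add0r !addrA.
by congr (_ + _ + _ + _); congr G; apply: val_inj.
Qed.

Lemma form4E (h h' : 'M[F]_4) i j :
  form4 h h' i j = h i o0 * h' j o3 + h i o1 * h' j o2 + h i o2 * h' j o1 + h i o3 * h' j o0.
Proof. by rewrite /form4 mxE sum4 !mxE !sum4 !mxE /=; ring. Qed.

Lemma pid_sandwichE r r' (M : 'M[F]_4) (i j : 'I_4) : (i < r)%N -> (j < r')%N ->
  (pid_mx r *m M *m pid_mx r') i j = M i j.
Proof. by move=> ir jr'; rewrite mulmx_pidE mul_pid_mxE ir jr' mul1r mulr1. Qed.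

Lemma pid_supp_eq0 r (U : 'M[F]_4) (i c : 'I_4) : U *m pid_mx r = U -> (r <= c)%N -> U i c = 0.
Proof. by move=> <- rc; rewrite mulmx_pidE ltnNge rc mulr0. Qed.

Lemma sandwich2E (U M V : 'M[F]_4) (i j : 'I_4) : U *m pid_mx 2%N = U -> V *m pid_mx 2%N = V ->
  (U *m M *m V^T) i j = U i o0 * M o0 o0 * V j o0 + U i o0 * M o0 o1 * V j o1
                        + U i o1 * M o1 o0 * V j o0 + U i o1 * M o1 o1 * V j o1.
Proof.
move=> U2 V2; have Ue (c : 'I_4) : (2 <= c)%N -> U i c = 0 by apply: pid_supp_eq0.
have Ve (c : 'I_4) : (2 <= c)%N -> V j c = 0 by apply: pid_supp_eq0.
rewrite !mxE sum4 /= !mxE !sum4 /= (Ue o2) ?(Ue o3) ?(Ve o2) ?(Ve o3) //; ring.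
Qed.

Definition det2 (M : 'M[F]_4) : F := M o0 o0 * M o1 o1 - M o0 o1 * M o1 o0.

Lemma det2_sandwich (U M V : 'M[F]_4) : U *m pid_mx 2%N = U -> V *m pid_mx 2%N = V ->
  det2 (U *m M *m V^T) = det2 U * det2 M * det2 V.
Proof. by move=> U2 V2; rewrite /det2 !sandwich2E //; ring. Qed.

Lemma det2_pid2 (M : 'M[F]_4) : det2 (pid_mx 2%N *m M *m pid_mx 2%N) = det2 M.
Proof. by rewrite /det2 !pid_sandwichE. Qed.

(* Rows 0 and 1 of hX x span the isotropic plane P_x = <(1,x,0,0), (0,0,1,-x)>
   of W; hY x lists the same two vectors in the opposite order.  The top left
   2 x 2 block of form4 for two such planes P_x, P_y has determinant
   +-(x - y)^2. *)
Definition hX (x : F) : 'M[F]_4 := \matrix_(i < 4, j < 4)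
  match (i : nat), (j : nat) with
  | 0, 0 | 1, 2 | 2, 1 | 3, 3 => 1%R | 0, 1 => x | 1, 3 => (- x)%R | _, _ => 0%R
  end%N.

Definition hY (x : F) : 'M[F]_4 := \matrix_(i < 4, j < 4)
  match (i : nat), (j : nat) with
  | 1, 0 | 0, 2 | 3, 1 | 2, 3 => 1%R | 1, 1 => x | 0, 3 => (- x)%R | _, _ => 0%R
  end%N.

Ltac case_ord4 i := case: i => [[|[|[|[|?]]]] ?] //.

Lemma hX_iso x : form4 (hX x) (hX x) = J4.
Proof. by apply/matrixP => i j; rewrite form4E !mxE; case_ord4 i; case_ord4 j; rewrite /=; ring. Qed.

Lemma hY_iso x : form4 (hY x) (hY x) = J4.
Proof. by apply/matrixP => i j; rewrite form4E !mxE; case_ord4 i; case_ord4 j; rewrite /=; ring. Qed.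

End FourByFour.

Section PlaneAlgebra.
Variable F : fieldType.

Lemma short_flag_eq (t s x0 y0 x1 y1 x2 y2 c : F) :
  t = s * (x0 * x1 - y0 * y1) -> t - 1 = (s - 1) * (x0 * x2 - y0 * y2) ->
  x1 * y2 = y1 * x2 -> x1 * c = 1 -> x2 * c = 1 -> t = s.
Proof.
move=> e01 e02 e12 e1 e2.
have x12 : x1 = x2 by rewrite -[x1]mulr1 -e2 mulrCA e1 mulr1.
have x1_neq0 : x1 != 0 by apply: contra_eq_neq e1 => ->; rewrite mul0r eq_sym oner_eq0.
have y12 : y1 = y2 by apply: (mulfI x1_neq0); rewrite e12 -x12 mulrC.
rewrite -x12 -y12 in e02; set m := x0 * x1 - y0 * y1 in e01 e02.
have /addrI/oppr_inj m1 : t - 1 = t - m by rewrite {1}e02 e01; ring.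
by rewrite e01 -m1 mulr1.
Qed.

Definition sq_cross_rel (t s : F) := t ^+ 2 * (s - 1) ^+ 2 = s ^+ 2 * (t - 1) ^+ 2.

Lemma sq_cross_rel_no_triangle t1 t2 t3 : (2%:R : F) != 0 ->
  [/\ t1 != t2, t2 != t3 & t3 != t1] ->
  sq_cross_rel t1 t2 -> sq_cross_rel t2 t3 -> sq_cross_rel t3 t1 -> False.
Proof.
move=> two_neq0 [n12 n23 n31] r12 r23 r31.
pose P (u v : F) := 2%:R * u * v - u - v.
have P_sym u v : P u v = P v u by rewrite /P; ring.
have P_eq0 u v : u != v -> sq_cross_rel u v -> P u v = 0.
  move=> nuv ruv; apply: (mulfI (_ : v - u != 0)); first by rewrite subr_eq0 eq_sym.
  by rewrite mulr0 -(subrr (u ^+ 2 * (v - 1) ^+ 2)) {2}ruv /P; ring.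
have half u v w : v != w -> P u v = 0 -> P u w = 0 -> 2%:R * u = 1.
  move=> nvw Puv Puw; have : (v - w) * (2%:R * u - 1) = P u v - P u w by rewrite /P; ring.
  by rewrite Puv Puw subrr => /eqP; rewrite mulf_eq0 !subr_eq0 (negbTE nvw) => /eqP.
have P12 := P_eq0 _ _ n12 r12; have P23 := P_eq0 _ _ n23 r23; have P31 := P_eq0 _ _ n31 r31.
have e1 : 2%:R * t1 = 1 by apply: (half _ t2 t3) => //; rewrite P_sym.
have e2 : 2%:R * t2 = 1 by apply: (half _ t1 t3) => //; rewrite 1?eq_sym // P_sym.
by move/eqP: n12; apply; apply: (mulfI two_neq0); rewrite e1 e2.
Qed.

End PlaneAlgebra.

Section Family.
Variables (F : fieldType) (n : nat) (n_ge2 : (2 <= n)%N).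
Variables (k : nat) (a : 'I_k -> seq nat).
Hypothesis a_adm : forall i, admissible n (a i).
Variable p : 'I_4 -> 'I_k.
Hypothesis p_inj : injective p.
Local Notation J4 := (Jform F 2%N).
Local Notation cfg := (@cfg F n n_ge2 k a).
Local Notation vis i := (vis4 n (flag_dim (a i) 0)).

Lemma eq_of_sub_eq (x y l r : F) : l = r -> x - y = l - r -> x = y.
Proof. by move=> -> /eqP; rewrite subrr subr_eq0 => /eqP. Qed.

Definition role (t : F) (c : 'I_4) : 'M[F]_4 :=
  match val c with 0 => hX t | 1 => hY 0 | 2 => hY 1 | _ => hX (-1) end%N.

Definition family (t : F) (i : 'I_k) : 'M[F]_4 :=
  if [pick c | p c == i] is Some c then role t c else 1%:M.

Lemma family_p t c : family t (p c) = role t c.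
Proof. by rewrite /family; case: pickP => [d /eqP/p_inj -> // | /(_ c)]; rewrite eqxx. Qed.

Lemma family_iso t i : form4 (family t i) (family t i) = J4.
Proof.
rewrite /family; case: pickP => [c _|_]; last by rewrite /form4 trmx1 mulmx1 mul1mx.
by rewrite /role; case: (val c) => [|[|[|]]]; rewrite ?hX_iso ?hY_iso.
Qed.

Lemma family_transport t s : same_orbit (cfg (family t)) (cfg (family s)) ->
  exists U : 'I_4 -> 'M[F]_4, (forall c, U c *m pid_mx (vis (p c)) = U c) /\
    forall c d, pid_mx (vis (p c)) *m form4 (role t c) (role t d) *m pid_mx (vis (p d)) =
                U c *m form4 (role s c) (role s d) *m (U d)^T.
Proof.
case=> g [g_iso g_maps]; exists (fun c => transport_mx n_ge2 a_adm (family t) (family s) g (p c)).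
split=> [c | c d]; first exact: transport_mx_pid.
by rewrite -!family_p; apply: form4_transport.
Qed.

Lemma family_short_orbit_eq t s : (2%:R : F) != 0 -> (flag_dim (a (p o3)) 0 < n)%N ->
  same_orbit (cfg (family t)) (cfg (family s)) -> t = s.
Proof.
move=> two_neq0 short /family_transport [U [U_pid E]].
have U_pid2 c : U c *m pid_mx 2%N = U c by apply: mulmx_pid_widen (U_pid c) (vis4_le2 _ _).
have U3_01 : U o3 o0 o1 = 0.
  by apply: pid_supp_eq0 (U_pid o3) _; rewrite /vis4 ltn_eqF.
have entry c d : form4 (role t c) (role t d) o0 o0 =
    let M := form4 (role s c) (role s d) in
    U c o0 o0 * M o0 o0 * U d o0 o0 + U c o0 o0 * M o0 o1 * U d o0 o1
    + U c o0 o1 * M o1 o0 * U d o0 o0 + U c o0 o1 * M o1 o1 * U d o0 o1.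
  by rewrite [RHS]/= -sandwich2E // -E pid_sandwichE // /vis4; case: eqP.
have e01 := entry o0 o1; have e02 := entry o0 o2; have e12 := entry o1 o2.
have e13 := entry o1 o3; have e23 := entry o2 o3.
rewrite /= !form4E !mxE /= ?U3_01 in e01 e02 e12 e13 e23.
apply: (short_flag_eq (x0 := U o0 o0 o0) (y0 := U o0 o0 o1) (x1 := U o1 o0 o0)
          (y1 := U o1 o0 o1) (x2 := U o2 o0 o0) (y2 := U o2 o0 o1) (c := U o3 o0 o0)).
- by apply: (eq_of_sub_eq e01 _); ring.
- by apply: (eq_of_sub_eq e02 _); ring.
- by apply: (eq_of_sub_eq (esym e12) _); ring.
- by apply: (eq_of_sub_eq e13 _); ring.
- by apply: (mulfI two_neq0); apply: (eq_of_sub_eq e23 _); ring.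
Qed.

Lemma family_long_orbit_rel t s : (2%:R : F) != 0 -> (forall c, flag_dim (a (p c)) 0 = n) ->
  same_orbit (cfg (family t)) (cfg (family s)) -> sq_cross_rel t s.
Proof.
move=> two_neq0 long /family_transport [U [U_pid E]].
have vis2 c : vis (p c) = 2%N by rewrite /vis4 long eqxx.
have U_pid2 c : U c *m pid_mx 2%N = U c by have := U_pid c; rewrite vis2.
have det2E c d : det2 (form4 (role t c) (role t d)) =
    det2 (U c) * det2 (form4 (role s c) (role s d)) * det2 (U d).
  by rewrite -det2_sandwich // -E !vis2 det2_pid2.
pose dt c d := det2 (form4 (role t c) (role t d)).
pose ds c d := det2 (form4 (role s c) (role s d)).
have cross : dt o0 o1 * dt o2 o3 * ds o0 o2 * ds o1 o3 = ds o0 o1 * ds o2 o3 * dt o0 o2 * dt o1 o3.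
  by rewrite [dt o0 o1]det2E [dt o2 o3]det2E [dt o0 o2]det2E [dt o1 o3]det2E /ds; ring.
rewrite /dt /ds /det2 !form4E !mxE /= in cross.
apply: (mulfI (mulf_neq0 two_neq0 two_neq0)).
by apply: (eq_of_sub_eq cross _); ring.
Qed.

End Family.

Lemma not_finitely_many_orbits (F : fieldType) n k (a : 'I_k -> seq nat)
    (cf : F -> multiflag_pt F n a) (R : F -> F -> Prop) :
  (forall s : seq F, exists x, x \notin s) ->
  (forall t, is_multiflag (cf t)) ->
  (forall t s, same_orbit (cf t) (cf s) -> R t s) ->
  (forall t1 t2 t3, [/\ t1 != t2, t2 != t3 & t3 != t1] ->
     R t1 t2 -> R t2 t3 -> R t3 t1 -> False) ->
  ~ finitely_many_orbits F n a.
Proof.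
move=> F_inf cf_flag cf_rel no_triangle [N [rep rep_orbit]].
have [xs [xs_uniq xs_size]] : exists xs : seq F, uniq xs /\ size xs = (2 * N)%N.+1.
  elim: (2 * N)%N.+1 => [|m [xs [xs_uniq xs_size]]]; first by exists [::].
  by have [x x_new] := F_inf xs; exists (x :: xs); rewrite /= x_new xs_uniq xs_size.
pose x (i : 'I_(2 * N)%N.+1) := nth 0 xs i.
have x_inj : injective x by move=> i j /eqP; rewrite nth_uniq ?xs_size // => /eqP/val_inj.
have /fin_all_exists[f f_orbit] i : exists m, same_orbit (cf (x i)) (rep m).
  exact: rep_orbit.
have rel i j : f i = f j -> R (x i) (x j).
  move=> fij; apply: cf_rel; apply: same_orbit_trans (f_orbit i) _.
  by rewrite fij; apply: same_orbit_sym.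
have [m /card_gt2P[i1 [i2 [i3 [[]]]]]] : exists m, (2 < #|[set i | f i == m]|)%N.
  by apply: pigeonhole_fiber_gt2; rewrite card_ord.
rewrite !inE => /eqP f1 /eqP f2 /eqP f3 [n12 n23 n31].
apply: (no_triangle (x i1) (x i2) (x i3)); rewrite ?(inj_eq x_inj) //; apply: rel; congruence.
Qed.

Section InfinitelyManyOrbits.
Variables (F : fieldType) (n : nat) (n_ge2 : (2 <= n)%N).
Variables (k : nat) (a : 'I_k -> seq nat).
Hypothesis a_adm : forall i, admissible n (a i).
Hypothesis F_infinite : forall s : seq F, exists x, x \notin s.
Hypothesis two_neq0 : (2%:R : F) != 0.

Lemma orbits_infinite_of_short_flag (p : 'I_4 -> 'I_k) : injective p ->
  (flag_dim (a (p o3)) 0 < n)%N -> ~ finitely_many_orbits F n a.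
Proof.
move=> p_inj short.
apply: (not_finitely_many_orbits (cf := fun t => cfg n_ge2 (family p t)) (R := eq)) => //.
- by move=> t; apply: cfg_multiflag => // i; apply: family_iso.
- by move=> t s; apply: family_short_orbit_eq.
- by move=> t1 t2 t3 [/eqP].
Qed.

Lemma orbits_infinite_of_long_flags (p : 'I_4 -> 'I_k) : injective p ->
  (forall c, flag_dim (a (p c)) 0 = n) -> ~ finitely_many_orbits F n a.
Proof.
move=> p_inj long.
apply: (not_finitely_many_orbits (cf := fun t => cfg n_ge2 (family p t)) (R := @sq_cross_rel F)) => //.
- by move=> t; apply: cfg_multiflag => // i; apply: family_iso.
- by move=> t s; apply: family_long_orbit_rel.
- by move=> t1 t2 t3; apply: sq_cross_rel_no_triangle.
Qed.

End InfinitelyManyOrbits.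

Theorem proposition1p2 (F : fieldType)
  (F_infinite : forall s : seq F, exists x : F, x \notin s)
  (F_char : (2%:R : F) != 0)
  (n k : nat) (hn : (2 <= n)%N) (hk : (4 <= k)%N)
  (a : 'I_k -> seq nat) (ha : forall i : 'I_k, admissible n (a i)) :
  ~ finitely_many_orbits F n a.
Proof.
pose emb : 'I_4 -> 'I_k := widen_ord hk.
have emb_inj : injective emb by move=> c d /(congr1 val) /= /val_inj.
case: (boolP [exists i, flag_dim (a i) 0 < n]%N) => [/existsP[i short] | /existsPn long].
- have p_inj : injective (tperm i (emb o3) \o emb) := inj_comp perm_inj emb_inj.
  by apply: (orbits_infinite_of_short_flag hn ha F_infinite F_char p_inj); rewrite /= tpermR.
- have full c : flag_dim (a (emb c)) 0 = n.
    by apply/eqP; rewrite eqn_leq flag_dim_le // leqNgt long.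
  exact: (orbits_infinite_of_long_flags hn ha F_infinite F_char emb_inj full).
Qed.
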